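(* Let $G$ be a mixed signed, directed graph. A subset $F\subseteq\mathbb{R}^n$ is a facet of $\mathrm{cone}(\mathcal{P}_G)$ if and only if there exists a facet subgraph $H$ of $G$ such that $\mathrm{cone}(\mathcal{P}_H)=F$.
   Context: A mixed signed, directed graph $G$ on vertex set $\{1,\dots,n\}$ has a set of signed edges $+ij$ or $-ij$ (loops $\pm ii$ allowed) and directed edges $(i,j)$ with $i\ne j$; between a pair of vertices any subset of $+ij,-ij,(i,j),(j,i)$ may occur. Define $\rho(\pm ij)=\pm(e_i+e_j)$ (so $\rho(\pm ii)=\pm2e_i$) and $\rho((i,j))=e_j-e_i$ in $\mathbb{R}^n$; $\mathcal{P}_G=\mathrm{conv}(\rho(E(G)))$, $\mathrm{cone}(\mathcal{P}_G)$ is the set of nonnegative real combinations of its points, and a facet is a proper face of maximal dimension. The augmented signed graph $\widetilde G$ is obtained by replacing each directed edge $(i,j)$ by a new (artificial) vertex $t_{(i,j)}$ and the two signed edges $-i\,t_{(i,j)}$ and $+t_{(i,j)}\,j$. A subgraph $H$ of $G$ has vertex set $\{1,\dots,n\}$ and a subset of the edges of $G$; $G\setminus H$ is the set of edges of $G$ not in $H$; $\widetilde H$ is the augmented graph of $H$ (with artificial vertices only for directed edges of $H$). For a signed graph, a component is a maximal connected subgraph (isolated vertices are components), and it is bipartite if its vertex set can be partitioned into $L,R$ (one possibly empty) with every edge having one endpoint in each (a component with a loop is not bipartite). Components and bipartite components of $G$ (resp. $H$) are those of $\widetilde G$ (resp. $\widetilde H$); $\mathrm{bicomp}(\cdot)$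 counts bipartite components. For a set $S$ of vertices of an augmented graph, $\pi(S)=S\cap\{1,\dots,n\}$. A subgraph $H$ of $G$ is a facet subgraph if (1) $\mathrm{bicomp}(H)=\mathrm{bicomp}(G)+1$, and (2) for any bipartite component $H'$ of $H$ which is not a component of $G$, there is a bipartition $V(\widetilde{H'})=\widetilde L\cup\widetilde R$ such that, with $L=\pi(\widetilde L)$ and $R=\pi(\widetilde R)$, every edge $e\in G\setminus H$ is of one of the forms: a positive edge with at least one endpoint in $L$ and none in $R$; a negative edge with at least one endpoint in $R$ and none in $L$; a directed edge $(i,j)$ with $j\in L$ and $i\notin L$; or a directed edge $(i,j)$ with $i\in R$ and $j\notin R$. *)

From HB Require Import structures.
From mathcomp Require Import all_boot all_order all_algebra.
Set Implicit Arguments. Unset Strict Implicit. Unset Printing Implicit Defensive.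
Import Order.TTheory GRing.Theory Num.Theory.
Local Open Scope ring_scope.

(* Mixed signed, directed graphs on the vertex set 'I_n = {0,..,n-1}   *)
(* (standing for {1,..,n}).                                            *)
(* An edge is a triple (k, i, j) with                                  *)
(*   k = Some true   : positive signed edge  +ij                       *)
(*   k = Some false  : negative signed edge  -ij                       *)
(*   k = None        : directed edge (i,j)                             *)
(* A graph is a finite set of edges, well formed when signed edges are *)
(* stored with i <= j (so +ij = +ji is a single edge; loops i = j are  *)
(* allowed) and directed edges have i <> j.                            *)

Definition edge (n : nat) := (option bool * 'I_n * 'I_n)%type.

Definition wf_graph n (G : {set edge n}) : bool :=
  [forall e in G,
     let: (k, i, j) := e in
     if k is Some _ then (i <= j)%N else i != j].

(* vertices of the augmented signed graph: original vertices [inl i],  *)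
(* artificial vertices [inr e] (t_e for directed edges e)              *)
Definition AV (n : nat) := ('I_n + edge n)%type.

Section Augmented.
Variable n : nat.
Implicit Types (H : {set edge n}) (u v : AV n) (C L : {set AV n}).

Definition is_directed (e : edge n) : bool := e.1.1 == None.

Definition augV H : {set AV n} :=
  [set v : AV n | if v is inr e then (e \in H) && is_directed e else true].

(* signed edges of the augmented graph contributed by one edge of H:   *)
(* triples (sign, endpoint, endpoint)                                  *)
Definition aug_of (e : edge n) : {set bool * AV n * AV n} :=
  let: (k, i, j) := e in
  match k with
  | Some s => [set (s, inl i, inl j)]
  | None => [set (false, inl i, inr e); (true, inr e, inl j)]
  end.

Definition augE H : {set bool * AV n * AV n} := \bigcup_(e in H) aug_of e.

Definition adj H : rel (AV n) := fun u v =>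
  [exists a in augE H, ((a.1.2 == u) && (a.2 == v)) || ((a.1.2 == v) && (a.2 == u))].

Definition comp H u : {set AV n} := [set v in augV H | connect (adj H) u v].

Definition comps H : {set {set AV n}} := [set comp H u | u in augV H].

Definition edges_at H C : {set bool * AV n * AV n} :=
  [set a in augE H | (a.1.2 \in C) || (a.2 \in C)].

(* L, C :\: L is a bipartition of the component C: every edge has one  *)
(* endpoint in L and the other in C :\: L (a loop is never allowed)    *)
Definition bipartition H C L : bool :=
  (L \subset C) &&
  [forall a in edges_at H C, (a.1.2 \in L) != (a.2 \in L)].

Definition bipartite H C : bool := [exists L : {set AV n}, bipartition H C L].

Definition bicomp H : nat := #|[set C in comps H | bipartite H C]|.

Definition is_comp_of G H C : bool :=
  (C \in comps G) && (edges_at G C == edges_at H C).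

Definition proj C : {set 'I_n} := [set i : 'I_n | inl i \in C].

Definition allowed_edge (L R : {set 'I_n}) (e : edge n) : bool :=
  let: (k, i, j) := e in
  match k with
  | Some true => ((i \in L) || (j \in L)) && (i \notin R) && (j \notin R)
  | Some false => ((i \in R) || (j \in R)) && (i \notin L) && (j \notin L)
  | None => ((j \in L) && (i \notin L)) || ((i \in R) && (j \notin R))
  end.

Definition facet_subgraph (G H : {set edge n}) : bool :=
  [&& H \subset G,
      bicomp H == (bicomp G).+1 &
      [forall C in comps H,
         (bipartite H C && ~~ is_comp_of G H C) ==>
         [exists L : {set AV n},
            bipartition H C L &&
            [forall e in G :\: H, allowed_edge (proj L) (proj (C :\: L)) e]]]].

End Augmented.

(* Geometry in R^n, R an arbitrary real (ordered) field, vectors being *)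
(* row vectors 'rV[R]_n; subsets of R^n are predicates.                *)
Section Geometry.
Variables (R : realFieldType) (n : nat).
Local Notation vec := 'rV[R]_n.

Definition unitv (i : 'I_n) : vec := delta_mx 0 i.

Definition rho (e : edge n) : vec :=
  let: (k, i, j) := e in
  match k with
  | Some true => unitv i + unitv j
  | Some false => - (unitv i + unitv j)
  | None => unitv j - unitv i
  end.

Definition PG (G : {set edge n}) : vec -> Prop := fun x =>
  exists c : edge n -> R,
    [/\ forall e, e \in G -> 0 <= c e,
        \sum_(e in G) c e = 1 &
        x = \sum_(e in G) c e *: rho e].

Definition cone (S : vec -> Prop) : vec -> Prop := fun x =>
  exists s : seq (R * vec),
    (forall p, p \in s -> 0 <= p.1 /\ S p.2) /\
    x = \sum_(p <- s) p.1 *: p.2.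

Definition seteq (A B : vec -> Prop) : Prop := forall x, A x <-> B x.

Definition dot (a x : vec) : R := \sum_(i < n) a 0 i * x 0 i.

Definition face (C F : vec -> Prop) : Prop :=
  (exists x, F x) /\
  exists (a : vec) (b : R),
    (forall x, C x -> dot a x <= b) /\
    (forall x, F x <-> (C x /\ dot a x = b)).

Definition proper_face (C F : vec -> Prop) : Prop := face C F /\ ~ seteq F C.

(* S contains k+1 affinely independent points, i.e. dim aff(S) >= k *)
Definition aff_indep_in (S : vec -> Prop) (k : nat) : Prop :=
  exists (x0 : vec) (s : seq vec),
    [/\ S x0, forall y, y \in s -> S y, size s = k &
        free [seq y - x0 | y <- s]].

(* dim aff(S) <= dim aff(T) *)
Definition dim_le (S T : vec -> Prop) : Prop :=
  forall k, aff_indep_in S k -> aff_indep_in T k.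

(* facet: a proper face of maximal dimension *)
Definition facet (C F : vec -> Prop) : Prop :=
  proper_face C F /\ forall F', proper_face C F' -> dim_le F' F.

End Geometry.

(* A face of cone(P_G) is cut out by a functional [a] that is nonpositive on every
   [rho e]; it is the cone over the edges on which [a] vanishes (the tight edges).
   A functional vanishes on [rho H] iff, read on the augmented graph of [H], its
   values at the two ends of every edge cancel: it is then zero on non-bipartite
   components and [+c]/[-c] on the two sides of each bipartite one.  Hence
   [dim span rho(H) = n - bicomp H], and the face cut out by [a] is a facet iff its
   tight edges [H] have exactly one bipartite component more than [G].  The sign
   vector [+1]/[-1] of a bipartition of that new component, suitably oriented, cuts
   out the same facet, and it is negative on an edge of [G] outside [H] exactly when
   the edge satisfies the facet-subgraph condition (2). *)

From Pilot Require Import Defs.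
From HB Require Import structures.
From mathcomp Require Import all_boot all_order all_algebra.
From mathcomp Require Import lra zify.
Set Implicit Arguments. Unset Strict Implicit. Unset Printing Implicit Defensive.
Import Order.TTheory GRing.Theory Num.Theory.
Local Open Scope ring_scope.

Lemma dimv_lt (K : fieldType) (vT : vectType K) (U V : {vspace vT}) v :
  (U <= V)%VS -> v \in V -> v \notin U -> (\dim U < \dim V)%N.
Proof.
move=> UV vV vNU; rewrite (ltn_leqif (dimv_leqif_eq UV)).
by apply: contra vNU => /eqP ->.
Qed.

Lemma dimv_add_line (K : fieldType) (vT : vectType K) (U : {vspace vT}) v :
  (\dim (U + <[v]>) <= (\dim U).+1)%N.
Proof. by have := dimv_sum_cap U <[v]>; rewrite dim_vline; case: (v != 0); lia. Qed.

Section DotProduct.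
Variables (R : realFieldType) (n : nat).
Local Notation vec := 'rV[R]_n.
Implicit Types (a x y : vec) (U : {vspace vec}).

Lemma dotC a x : dot a x = dot x a.
Proof. by apply: eq_bigr => i _; rewrite mulrC. Qed.

Lemma dotDr a x y : dot a (x + y) = dot a x + dot a y.
Proof. by rewrite /dot -big_split; apply: eq_bigr => i _; rewrite mxE mulrDr. Qed.

Lemma dotZr a x c : dot a (c *: x) = c * dot a x.
Proof. by rewrite /dot mulr_sumr; apply: eq_bigr => i _; rewrite mxE mulrCA. Qed.

Lemma dot0r a : dot a 0 = 0.
Proof. by rewrite /dot big1 // => i _; rewrite mxE mulr0. Qed.

Lemma dotNr a x : dot a (- x) = - dot a x.
Proof. by rewrite -scaleN1r dotZr mulN1r. Qed.

Lemma dotBr a x y : dot a (x - y) = dot a x - dot a y.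
Proof. by rewrite dotDr dotNr. Qed.

Lemma dot_sumr a I (r : seq I) (P : pred I) (F : I -> vec) :
  dot a (\sum_(i <- r | P i) F i) = \sum_(i <- r | P i) dot a (F i).
Proof. exact: (big_morph _ (dotDr a) (dot0r a)). Qed.

Lemma dotDl a y x : dot (a + y) x = dot a x + dot y x.
Proof. by rewrite dotC dotDr !(dotC x). Qed.

Lemma dotZl a x c : dot (c *: a) x = c * dot a x.
Proof. by rewrite dotC dotZr dotC. Qed.

Lemma dotNl a x : dot (- a) x = - dot a x.
Proof. by rewrite dotC dotNr dotC. Qed.

Lemma dot_unitv a i : dot a (unitv R i) = a 0 i.
Proof.
rewrite /dot (bigD1 i) //= big1 ?addr0 => [|j ji]; rewrite /unitv mxE.
  by rewrite !eqxx mulr1.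
by rewrite (negbTE ji) andbF mulr0.
Qed.

Lemma dot_self_eq0 x : dot x x = 0 -> x = 0.
Proof.
move=> /eqP; rewrite psumr_eq0 => [/allP x0|i _]; last by rewrite -expr2 sqr_ge0.
apply/rowP => i; rewrite mxE; have := x0 i (mem_index_enum _).
by rewrite implyTb mulf_eq0 orbb => /eqP.
Qed.

Definition annmx U : 'M[R]_(n, \dim U) := \matrix_(i, j) (vbasis U)`_j 0 i.

Definition ann U : {vspace vec} := lker (linfun (@mulmxr _ 1 n _ (annmx U))).

Lemma annP U a : reflect (forall v, v \in U -> dot a v = 0) (a \in ann U).
Proof.
rewrite memv_ker lfunE /=.
have mulE j : (a *m annmx U) 0 j = dot a (vbasis U)`_j.
  by rewrite !mxE; apply: eq_bigr => i _; rewrite mxE.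
apply: (iffP eqP) => [a0 v /coord_vbasis -> | a0].
  by rewrite dot_sumr big1 // => j _; rewrite dotZr -mulE a0 mxE mulr0.
by apply/rowP => j; rewrite mulE mxE a0 // vbasis_mem // mem_nth ?size_tuple.
Qed.

Lemma ann_line a x : (x \in ann <[a]>) = (dot a x == 0).
Proof.
apply/annP/eqP => [a0 | ax y /vlineP [k ->]]; first by rewrite dotC a0 ?memv_line.
by rewrite dotZr dotC ax mulr0.
Qed.

Lemma dim_ann U : (\dim (ann U) + \dim U)%N = n.
Proof.
have dim_full : \dim {: vec} = n by rewrite dimvf /dim /= mul1n.
apply/eqP; rewrite eqn_leq; apply/andP; split.
  have capU0 : (ann U :&: U = 0)%VS.
    apply/eqP; rewrite -subv0; apply/subvP => v; rewrite memv_cap memv0.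
    by move=> /andP [/annP v0 Uv]; rewrite (dot_self_eq0 (v0 v Uv)).
  by rewrite -dimv_sum_cap capU0 dimv0 addn0 -[leqRHS]dim_full dimvS ?subvf.
have := limg_ker_dim (linfun (@mulmxr _ 1 n _ (annmx U))) fullv.
rewrite capfv dim_full => dimE; rewrite -[leqLHS]dimE leq_add2l.
by apply: leq_trans (dimvS (subvf _)) _; rewrite dimvf /dim /= mul1n.
Qed.

End DotProduct.

Section EdgeCones.
Variables (R : realFieldType) (n : nat).
Local Notation vec := 'rV[R]_n.
Local Notation rho := (@rho R n).
Implicit Types (X Y G : {set edge n}) (a x : vec).

Definition span_rho X : {vspace vec} := <<[seq rho e | e <- enum X]>>%VS.
Definition ann_rho X : {vspace vec} := ann (span_rho X).

Lemma rho_span X e : e \in X -> rho e \in span_rho X.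
Proof. by move=> eX; apply/memv_span/map_f; rewrite mem_enum. Qed.

Lemma ann_rhoP X a :
  reflect (forall e, e \in X -> dot a (rho e) = 0) (a \in ann_rho X).
Proof.
apply: (iffP (annP _ _)) => [a0 e eX | a0 v]; first by rewrite a0 ?rho_span.
suff /subvP sub : (span_rho X <= ann <[a]>)%VS by move=> /sub; rewrite ann_line => /eqP.
by apply/span_subvP => _ /mapP [e /[!mem_enum] eX ->]; rewrite ann_line a0.
Qed.

Lemma span_rhoS X Y : X \subset Y -> (span_rho X <= span_rho Y)%VS.
Proof.
move=> XY; apply/span_subvP => _ /mapP [e /[!mem_enum] eX ->].
by rewrite rho_span // (subsetP XY).
Qed.

Lemma ann_rhoS X Y : X \subset Y -> (ann_rho Y <= ann_rho X)%VS.
Proof.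
move=> XY; apply/subvP => a /ann_rhoP a0; apply/ann_rhoP => e eX.
by rewrite a0 // (subsetP XY).
Qed.

Definition cone_rho X : vec -> Prop := fun x =>
  exists l : edge n -> R,
    (forall e, e \in X -> 0 <= l e) /\ x = \sum_(e in X) l e *: rho e.

Lemma cone_rho0 X : cone_rho X 0.
Proof. by exists (fun=> 0); split=> //; rewrite big1 // => e _; rewrite scale0r. Qed.

Lemma PG_rho X e : e \in X -> PG X (rho e).
Proof.
move=> eX; exists (fun e' => (e' == e)%:R); split => [e' _||]; first by rewrite ler0n.
  by rewrite (bigD1 e) //= eqxx big1 ?addr0 // => e' /andP [_ /negbTE ->].
rewrite (bigD1 e) //= eqxx scale1r big1 ?addr0 // => e' /andP [_ /negbTE ->].
by rewrite scale0r.
Qed.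

Lemma cone_rho_rho X e : e \in X -> cone_rho X (rho e).
Proof. by move=> /PG_rho [c [c_ge0 _ ->]]; exists c. Qed.

Lemma cone_rhoZ X c x : 0 <= c -> cone_rho X x -> cone_rho X (c *: x).
Proof.
move=> c0 [l [l0 ->]]; exists (fun e => c * l e); split => [e eX|].
  by rewrite mulr_ge0 ?l0.
by rewrite scaler_sumr; apply: eq_bigr => e _; rewrite scalerA.
Qed.

Lemma cone_rhoD X x y : cone_rho X x -> cone_rho X y -> cone_rho X (x + y).
Proof.
move=> [l [l0 ->]] [m [m0 ->]]; exists (fun e => l e + m e); split => [e eX|].
  by rewrite addr_ge0 ?l0 ?m0.
by rewrite -big_split; apply: eq_bigr => e _; rewrite scalerDl.
Qed.

Lemma cone_rho_span X x : cone_rho X x -> x \in span_rho X.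
Proof. by move=> [l [_ ->]]; apply: memv_suml => e eX; rewrite memvZ ?rho_span. Qed.

Lemma dot_cone_rho a X (l : edge n -> R) :
  dot a (\sum_(e in X) l e *: rho e) = \sum_(e in X) l e * dot a (rho e).
Proof. by rewrite dot_sumr; apply: eq_bigr => e _; rewrite dotZr. Qed.

Lemma cone_PG X : seteq (cone (PG X)) (cone_rho X).
Proof.
move=> x; split.
  move=> [s [s_ge0 ->]]; elim: s s_ge0 => [|[c y] s IH] s_ge0.
    by rewrite big_nil; exact: cone_rho0.
  rewrite big_cons; apply: cone_rhoD.
    by have [/= c0 [d [d0 _ ->]]] := s_ge0 _ (mem_head _ _); apply: cone_rhoZ => //; exists d.
  by apply: IH => p ps; apply: s_ge0; rewrite inE ps orbT.
move=> [l [l0 ->]]; exists [seq (l e, rho e) | e <- enum X]; split; last first.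
  by rewrite big_map big_enum.
by move=> _ /mapP [e /[!mem_enum] eX ->]; split; [exact: l0 | exact: PG_rho].
Qed.

Definition nonpos_on G a := forall e, e \in G -> dot a (rho e) <= 0.

Definition tight G a := [set e in G | dot a (rho e) == 0].

Lemma tightE G a e : (e \in tight G a) = (e \in G) && (dot a (rho e) == 0).
Proof. by rewrite inE. Qed.

Lemma tight_sub G a : tight G a \subset G.
Proof. by apply/subsetP => e; rewrite tightE => /andP []. Qed.

Lemma ann_rho_tight G a : a \in ann_rho (tight G a).
Proof. by apply/ann_rhoP => e; rewrite tightE => /andP [_ /eqP]. Qed.

Lemma cone_rhoS X Y x : X \subset Y -> cone_rho X x -> cone_rho Y x.
Proof.
move=> XY [l [l0 ->]]; exists (fun e => if e \in X then l e else 0); split.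
  by move=> e _; case: ifP => // /l0.
rewrite [RHS](big_setID X) /= (setIidPr XY) [X in _ + X]big1 ?addr0.
  by apply: eq_bigr => e ->.
by move=> e /setDP [_ /negbTE ->]; rewrite scale0r.
Qed.

Lemma cone_rho_tight G a : nonpos_on G a ->
  seteq (fun x => cone_rho G x /\ dot a x = 0) (cone_rho (tight G a)).
Proof.
move=> aG x; split => [[[l [l0 ->]]] | Tx]; last first.
  split; first exact: cone_rhoS (tight_sub G a) Tx.
  have [l [_ ->]] := Tx.
  by rewrite dot_cone_rho big1 // => e /[!tightE] /andP [_ /eqP ->]; rewrite mulr0.
rewrite dot_cone_rho => sum0.
have term0 e : e \in G -> l e * dot a (rho e) = 0.
  move=> eG; apply/eqP; rewrite -oppr_eq0; apply/eqP; move: e eG.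
  apply/psumr_eq0P; last by rewrite sumrN sum0 oppr0.
  by move=> e eG; rewrite oppr_ge0 mulr_ge0_le0 ?l0 ?aG.
exists l; split => [e /[!tightE] /andP [/l0] //|].
rewrite [LHS](big_setID (tight G a)) /= (setIidPr (tight_sub G a)) [X in _ + X]big1 ?addr0 //.
move=> e /setDP [eG]; rewrite tightE eG /= => ne.
by move: (term0 e eG) => /eqP; rewrite mulf_eq0 (negbTE ne) orbF => /eqP ->; rewrite scale0r.
Qed.

Lemma face_cone_tight G a : nonpos_on G a ->
  face (cone (PG G)) (cone_rho (tight G a)).
Proof.
move=> aG; split; first by exists 0; exact: cone_rho0.
exists a, 0; split => [x /cone_PG [l [l0 ->]] | x].
  by rewrite dot_cone_rho sumr_le0 // => e eG; rewrite mulr_ge0_le0 ?l0 ?aG.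
by rewrite -cone_rho_tight // cone_PG.
Qed.

(* A valid inequality [dot a x <= b] for a cone has [b >= 0] (test [x = 0]) and
   cannot be tight at [x] with [b > 0] (test [2 x]); so [b = 0]. *)
Lemma tight_of_face G F : face (cone (PG G)) F ->
  exists a, nonpos_on G a /\ seteq F (cone_rho (tight G a)).
Proof.
move=> [[x0 Fx0] [a [b [valid EF]]]].
have b_ge0 : 0 <= b by rewrite -(dot0r a) valid ?cone_PG; last exact: cone_rho0.
have [Cx0 ax0] := (EF x0).1 Fx0.
have b_le_half : 2 * b <= b.
  by rewrite -{1}ax0 -dotZr valid ?cone_PG //; apply/cone_rhoZ/cone_PG.
have b0 : b = 0 by lra.
rewrite {}b0 in valid EF.
have aG : nonpos_on G a by move=> e eG; apply: valid; apply/cone_PG/cone_rho_rho.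
by exists a; split => // x; rewrite EF -cone_rho_tight // cone_PG.
Qed.

Lemma proper_face_tightP G a : nonpos_on G a ->
  proper_face (cone (PG G)) (cone_rho (tight G a)) <-> a \notin ann_rho G.
Proof.
move=> aG; split => [[_ not_all] | aNG].
  apply: contra_notN not_all => /ann_rhoP a0 x.
  suff -> : tight G a = G by rewrite cone_PG.
  by apply/setP => e; rewrite tightE andb_idr // => /a0 ->.
split; first exact: face_cone_tight.
have [e eG ae] : exists2 e, e \in G & dot a (rho e) != 0.
  apply/exists_inP; apply: contraR aNG => /exists_inPn a0.
  by apply/ann_rhoP => e /a0 /negPn /eqP.
move=> /(_ (rho e)) /iffRL; rewrite cone_PG => /(_ (cone_rho_rho eG)).
by rewrite -cone_rho_tight // => -[_ /eqP]; rewrite (negbTE ae).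
Qed.

Lemma free_subseq_span (s : seq vec) :
  exists t, [/\ {subset t <= s}, free t & (<<t>> = <<s>>)%VS].
Proof.
elim: s => [|v s [t [ts t_free t_span]]]; first by exists [::]; rewrite nil_free.
have [vt | vNt] := boolP (v \in <<t>>%VS).
  exists t; split => // [x /ts xs|]; first by rewrite inE xs orbT.
  by rewrite span_cons -t_span; apply/esym/addv_idPr; rewrite -memvE.
exists (v :: t); split; last by rewrite !span_cons t_span.
  by move=> x; rewrite !inE => /orP [-> // | /ts ->]; rewrite orbT.
by rewrite free_cons vNt.
Qed.

Lemma aff_indep_seteq (S T : vec -> Prop) k :
  seteq S T -> aff_indep_in S k -> aff_indep_in T k.
Proof.
move=> ST [x0 [s [Sx0 Ss sz s_free]]].
by exists x0, s; split => // [|y /Ss]; rewrite -ST.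
Qed.

(* Since [0] lies in the cone, affine independence reduces to linear independence
   of points of the cone, which span [span_rho X]. *)
Lemma aff_indep_cone_rho X k :
  aff_indep_in (cone_rho X) k <-> (k <= \dim (span_rho X))%N.
Proof.
split => [[x0 [s [Cx0 Cs <- s_free]]] | le_k].
  rewrite -(size_map (fun y => y - x0)) -(eqP s_free) dimvS //.
  apply/span_subvP => _ /mapP [y ys ->].
  by apply: memvB; apply: cone_rho_span => //; apply: Cs.
have [t [ts t_free t_span]] := free_subseq_span [seq rho e | e <- enum X].
have size_t : size t = \dim (span_rho X) by rewrite /span_rho -t_span (eqP t_free).
exists 0, (take k t); split.
- exact: cone_rho0.
- by move=> y /mem_take /ts /mapP [e /[!mem_enum] eX ->]; exact: cone_rho_rho.
- by rewrite size_takel // size_t.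
rewrite (eq_map (@subr0 _)) map_id.
by apply: (@catl_free _ _ (drop k t)); rewrite cat_take_drop.
Qed.

Lemma dim_le_cone_rho_span X Y :
  dim_le (cone_rho X) (cone_rho Y) <-> (\dim (span_rho X) <= \dim (span_rho Y))%N.
Proof.
split => [le_XY | le_XY k]; first by apply/aff_indep_cone_rho/le_XY/aff_indep_cone_rho.
by rewrite !aff_indep_cone_rho => /leq_trans; apply.
Qed.

End EdgeCones.

Section AugmentedGraph.
Variable n : nat.
Implicit Types (X Y G H : {set edge n}) (u v w : AV n) (C D L : {set AV n}).

Lemma augV_inl X i : inl i \in augV X.
Proof. by rewrite inE. Qed.

Lemma augV_inr X e : (inr e \in augV X) = (e \in X) && is_directed e.
Proof. by rewrite inE. Qed.

Lemma augEP X t : reflect (exists2 e, e \in X & t \in aug_of e) (t \in augE X).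
Proof. exact: bigcupP. Qed.

Lemma augE_augV X t : t \in augE X -> (t.1.2 \in augV X) && (t.2 \in augV X).
Proof.
move=> /augEP [[[[s|] i] j] eX]; first by rewrite inE => /eqP -> /=; rewrite !augV_inl.
by rewrite !inE => /orP [] /eqP -> /=; rewrite eX.
Qed.

Lemma augE_subset X Y : X \subset Y -> augE X \subset augE Y.
Proof.
move=> XY; apply/subsetP => t /augEP [e eX te]; apply/augEP.
by exists e; rewrite ?(subsetP XY).
Qed.

Lemma augV_subset X Y : X \subset Y -> augV X \subset augV Y.
Proof.
move=> XY; apply/subsetP => [[i|e]]; rewrite ?augV_inl // !augV_inr.
by move=> /andP [/(subsetP XY) -> ->].
Qed.

Lemma adjP X u v :
  reflect (exists2 t, t \in augE X &
             ((t.1.2 == u) && (t.2 == v)) || ((t.1.2 == v) && (t.2 == u)))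
          (adj X u v).
Proof. exact: exists_inP. Qed.

Lemma adj_sym X : symmetric (adj X).
Proof. by move=> u v; apply/adjP/adjP => -[t tE uv]; exists t; rewrite // orbC. Qed.

Lemma connect_sym_adj X : connect_sym (adj X).
Proof. exact/sym_connect_sym/adj_sym. Qed.

Lemma adj_subset X Y : X \subset Y -> subrel (adj X) (adj Y).
Proof.
move=> XY u v /adjP [t tE uv]; apply/adjP.
by exists t; rewrite ?(subsetP (augE_subset XY)).
Qed.

Lemma adj_augV X u v : adj X u v -> v \in augV X.
Proof.
move=> /adjP [t /augE_augV /andP [t1 t2]].
by case/orP => /andP [/eqP e1 /eqP e2]; rewrite -?e1 -?e2.
Qed.

Lemma mem_comp X u v :
  (v \in Defs.comp X u) = (v \in augV X) && connect (adj X) u v.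
Proof. by rewrite inE. Qed.

Lemma comp_refl X u : u \in augV X -> u \in Defs.comp X u.
Proof. by move=> uV; rewrite mem_comp uV connect0. Qed.

Lemma compsP X C :
  reflect (exists2 u, u \in augV X & C = Defs.comp X u) (C \in comps X).
Proof. exact: imsetP. Qed.

Lemma comp_comps X v : v \in augV X -> Defs.comp X v \in comps X.
Proof. by move=> vV; apply/compsP; exists v. Qed.

Lemma comps_augV X C v : C \in comps X -> v \in C -> v \in augV X.
Proof. by move=> /compsP [u _ ->]; rewrite mem_comp => /andP []. Qed.

Lemma comps_closed X C : C \in comps X -> closed (adj X) C.
Proof.
move=> /compsP [u _ ->]; apply: intro_closed; first exact: connect_sym_adj.
move=> v w vw; rewrite !mem_comp (adj_augV vw) => /andP [_ uv].
exact: connect_trans uv (connect1 vw).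
Qed.

Lemma comp_eq X u v : v \in Defs.comp X u -> Defs.comp X v = Defs.comp X u.
Proof.
rewrite mem_comp => /andP [_ uv]; apply/setP => w; rewrite !mem_comp.
congr (_ && _); apply/idP/idP => [vw | uw]; first exact: connect_trans uv vw.
by apply: connect_trans uw; rewrite connect_sym_adj.
Qed.

Lemma comps_eq X C v : C \in comps X -> v \in C -> C = Defs.comp X v.
Proof. by move=> /compsP [u _ ->] /comp_eq ->. Qed.

Lemma comps_disj X C D v : C \in comps X -> D \in comps X ->
  v \in C -> v \in D -> C = D.
Proof. by move=> CX DX vC vD; rewrite (comps_eq CX vC) (comps_eq DX vD). Qed.

Lemma comps_edge X C t : C \in comps X -> t \in augE X ->
  (t.1.2 \in C) || (t.2 \in C) -> (t.1.2 \in C) && (t.2 \in C).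
Proof.
move=> CX tE; suff -> : (t.1.2 \in C) = (t.2 \in C) by rewrite orbb andbb.
by apply: (comps_closed CX); apply/adjP; exists t; rewrite ?eqxx.
Qed.

(* Every component contains an original vertex: an artificial vertex [t_e] is
   adjacent to the tail of [e]. *)
Lemma comps_inl X C : C \in comps X -> exists i, inl i \in C.
Proof.
move=> CX; have [[i|e] uV Cu] := compsP _ _ CX; have uC := comp_refl uV;
  rewrite -{}Cu in uC; first by exists i.
move: uV; rewrite augV_inr => /andP [eX /eqP e_dir].
exists e.1.2; suff /(comps_closed CX) -> : adj X (inl e.1.2) (inr e) by [].
apply/adjP.
exists (false, inl e.1.2, inr e); rewrite ?eqxx ?orbT //.
by apply/augEP; exists e => //; case: e eX e_dir uC => [[k i] j] /= _ ->; rewrite !inE eqxx.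
Qed.

Lemma comps_const X C (T : eqType) (f : AV n -> T) : C \in comps X ->
  (forall v w, v \in C -> adj X v w -> f w = f v) ->
  {in C &, forall v w, f v = f w}.
Proof.
move=> CX f_adj; have [u uV Cu] := compsP _ _ CX.
suff to_u v : v \in C -> f v = f u by move=> v w /to_u -> /to_u ->.
have uC : u \in C by rewrite Cu comp_refl.
rewrite {1}Cu mem_comp => /andP [_ /connectP [p u_p ->]].
elim: p u u_p uC {Cu uV} => //= y p IHp x /andP [xy y_p] xC.
by rewrite (IHp y y_p) ?(f_adj x y xC xy) // -(comps_closed CX xy).
Qed.

Lemma bipartition_setD X C L : C \in comps X -> bipartition X C L ->
  bipartition X C (C :\: L).
Proof.
move=> CX /andP [LC /forall_inP LP]; rewrite /bipartition subsetDl.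
apply/forall_inP => t tC; have := LP t tC; move: tC.
rewrite inE => /andP [tE /(comps_edge CX tE) /andP [t1 t2]].
by rewrite !inE t1 t2 !andbT; case: (t.1.2 \in L); case: (t.2 \in L).
Qed.

Lemma bipartite_edges_at G H C :
  edges_at G C = edges_at H C -> bipartite H C -> bipartite G C.
Proof. by rewrite /bipartite /bipartition => ->. Qed.

Lemma comps_of_edges_at G H C : H \subset G -> C \in comps H ->
  edges_at G C = edges_at H C -> C \in comps G.
Proof.
move=> HG CH; have [u uV Cu] := compsP _ _ CH; subst C => edgesE.
have uC := comp_refl uV; set C' := Defs.comp H u in CH edgesE uC *.
have C'closed : closed (adj G) C'.
  apply: intro_closed; first exact: connect_sym_adj.
  move=> x y /adjP [t tE xy] xC.
  have : t \in edges_at G C'.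
    by rewrite inE tE; case/orP: xy => /andP [/eqP -> /eqP ->]; rewrite xC ?orbT.
  rewrite edgesE inE => /andP [tH _]; rewrite -(comps_closed CH (x := x)) //.
  by apply/adjP; exists t.
suff -> : C' = Defs.comp G u by rewrite comp_comps // (subsetP (augV_subset HG)).
apply/setP => v; rewrite !mem_comp; apply/andP/andP => -[vV uv].
  split; first exact: (subsetP (augV_subset HG)).
  by apply: connect_sub uv => x y /(adj_subset HG) /connect1.
by have := closed_connect C'closed uv; rewrite uC => /esym; rewrite mem_comp => /andP [].
Qed.

Lemma bicomp_le G H :
  (forall C, C \in comps H -> bipartite H C -> is_comp_of G H C) ->
  (bicomp H <= bicomp G)%N.
Proof.
move=> comps_HG; apply/subset_leq_card/subsetP => C; rewrite !inE => /andP [CH bC].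
have /andP [CG /eqP edgesE] := comps_HG C CH bC.
by rewrite CG (bipartite_edges_at edgesE).
Qed.

End AugmentedGraph.

Section AnnihilatorDimension.
Variables (R : realFieldType) (n : nat).
Local Notation vec := 'rV[R]_n.
Local Notation rho := (@rho R n).
Local Notation span_rho := (@span_rho R n).
Local Notation ann_rho := (@ann_rho R n).
Implicit Types (X : {set edge n}) (v x y : AV n) (C L : {set AV n}) (a : vec).

Lemma dot_rho a (k : option bool) i j : dot a (rho (k, i, j)) =
  match k with
  | Some true => a 0 i + a 0 j
  | Some false => - (a 0 i + a 0 j)
  | None => a 0 j - a 0 i
  end.
Proof. by case: k => [[]|] /=; rewrite ?dotNr ?dotBr ?dotDr !dot_unitv. Qed.

(* The artificial vertex [t_(i,j)] gets the value [- a_i], so that [a] vanishes on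
   [rho X] iff the values at the two ends of every augmented edge sum to [0]. *)
Definition aug_val a v : R :=
  match v with inl i => a 0 i | inr e => - a 0 e.1.2 end.

Lemma aug_val_edge X a t : a \in ann_rho X -> t \in augE X ->
  aug_val a t.1.2 + aug_val a t.2 = 0.
Proof.
move=> /ann_rhoP a0 /augEP [[[k i] j] eX te]; have := a0 _ eX; rewrite dot_rho.
case: k eX te => [[]|] eX; rewrite !inE.
- by move=> /eqP ->.
- by move=> /eqP -> /eqP; rewrite oppr_eq0 => /eqP.
- by case/orP => /eqP -> /=; rewrite ?subrr // addrC.
Qed.

Lemma aug_val_adj X a x y : a \in ann_rho X -> adj X x y ->
  aug_val a x + aug_val a y = 0.
Proof.
move=> aX /adjP [t tE /orP [] /andP [/eqP <- /eqP <-]]; last rewrite addrC.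
all: exact: aug_val_edge aX tE.
Qed.

Lemma ann_rho_aug X (g : AV n -> R) :
  (forall t, t \in augE X -> g t.1.2 + g t.2 = 0) -> \row_i g (inl i) \in ann_rho X.
Proof.
move=> g0; apply/ann_rhoP => -[[k i] j] eX; rewrite dot_rho !mxE.
have augE_of t : t \in aug_of (k, i, j) -> g t.1.2 + g t.2 = 0.
  by move=> te; apply: g0; apply/augEP; exists (k, i, j).
case: k eX augE_of => [[]|] _ g0'.
- by rewrite (g0' (true, inl i, inl j)) ?inE.
- by rewrite (g0' (false, inl i, inl j)) ?oppr0 ?inE.
have := g0' (false, inl i, inr (None, i, j)); rewrite !inE eqxx => /(_ isT) /= g1.
have := g0' (true, inr (None, i, j), inl j); rewrite !inE eqxx orbT => /(_ isT) /= g2.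
lra.
Qed.

Definition sign_in L v : R := if v \in L then -1 else 1.

Lemma adj_bipartition X C L x y : C \in comps X -> bipartition X C L ->
  x \in C -> adj X x y -> (x \in L) != (y \in L).
Proof.
move=> CX /andP [_ /forall_inP LP] xC /adjP [t tE xy].
have tC : t \in edges_at X C.
  by rewrite inE tE; case/orP: xy => /andP [/eqP -> /eqP ->]; rewrite xC ?orbT.
by have := LP t tC; case/orP: xy => /andP [/eqP -> /eqP ->] //; rewrite eq_sym.
Qed.

Lemma aug_val_sign_const X a C L : a \in ann_rho X -> C \in comps X ->
  bipartition X C L ->
  {in C &, forall v w, aug_val a v * sign_in L v = aug_val a w * sign_in L w}.
Proof.
move=> aX CX CL; apply: (comps_const CX) => x y xC xy.
have sum0 := aug_val_adj aX xy; have := adj_bipartition CX CL xC xy.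
by rewrite /sign_in; case: (x \in L); case: (y \in L) => //= _; lra.
Qed.

(* On a non-bipartite component [aug_val a] is constant up to sign; were it
   nonzero, its sign would give a bipartition. *)
Lemma aug_val_nonbipartite X a C : a \in ann_rho X -> C \in comps X ->
  ~~ bipartite X C -> {in C, forall v, aug_val a v = 0}.
Proof.
move=> aX CX nbC v vC; apply/eqP; apply: contraNT nbC => nz.
set z := aug_val a v in nz.
have sq_const : {in C &, forall w w', aug_val a w ^+ 2 = aug_val a w' ^+ 2}.
  apply: (comps_const CX) => x y _ xy.
  by have /eqP := aug_val_adj aX xy; rewrite addr_eq0 => /eqP ->; rewrite sqrrN.
have pm w : w \in C -> (aug_val a w == z) || (aug_val a w == - z).
  by move=> wC; rewrite -eqf_sqr (sq_const w v).
have z_neq : z != - z by apply: contra nz => /eqP zE; apply/eqP; lra.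
apply/existsP; exists [set w in C | aug_val a w != z].
rewrite /bipartition; apply/andP; split.
  by apply/subsetP => w; rewrite inE => /andP [].
apply/forall_inP => t /[!inE] /andP [tE tC].
have /andP [t1 t2] := comps_edge CX tE tC; have sum0 := aug_val_edge aX tE.
rewrite t1 t2 /=; case/orP: (pm _ t1) => /eqP e1.
  have e2 : aug_val a t.2 = - z by lra.
  by rewrite e1 e2 eqxx (eq_sym (- z)) z_neq.
have e2 : aug_val a t.2 = z by lra.
by rewrite e1 e2 eqxx (eq_sym (- z)) z_neq.
Qed.

Definition bip_vec C L : vec :=
  \row_i (if inl i \in C :\: L then 1 else if inl i \in L then -1 else 0).

Lemma bip_vecE C L i : bip_vec C L 0 i =
  if inl i \in C :\: L then 1 else if inl i \in L then -1 else 0.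
Proof. by rewrite mxE. Qed.

Lemma bip_vec_in C L i : L \subset C -> inl i \in C -> bip_vec C L 0 i = sign_in L (inl i).
Proof. by move=> LC iC; rewrite bip_vecE inE iC andbT /sign_in; case: (inl i \in L). Qed.

Lemma bip_vec_out C L i : L \subset C -> inl i \notin C -> bip_vec C L 0 i = 0.
Proof.
move=> LC iC; rewrite bip_vecE inE (negbTE iC) andbF.
by rewrite (negbTE (contra (subsetP LC _) iC)).
Qed.

Lemma bip_vec_ann X C L : C \in comps X -> bipartition X C L -> bip_vec C L \in ann_rho X.
Proof.
move=> CX CL; have /andP [LC /forall_inP LP] := CL.
pose g v : R := if v \in C :\: L then 1 else if v \in L then -1 else 0.
apply: (ann_rho_aug (g := g)) => t tE; rewrite /g.
have [tC | tNC] := boolP ((t.1.2 \in C) || (t.2 \in C)).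
  have /andP [t1 t2] := comps_edge CX tE tC.
  have := LP t; rewrite inE tE tC /= !inE t1 t2 !andbT => /(_ isT).
  by case: (t.1.2 \in L); case: (t.2 \in L) => //= _; lra.
move: tNC; rewrite negb_or => /andP [t1 t2].
rewrite !inE (negbTE t1) (negbTE t2) (negbTE (contra (subsetP LC _) t1)).
by rewrite (negbTE (contra (subsetP LC _) t2)) addr0.
Qed.

Definition bip_comps X := [set C in comps X | bipartite X C].

Definition bip_part X C : {set AV n} :=
  if [pick L | bipartition X C L] is Some L then L else set0.

Lemma bip_partP X C : C \in bip_comps X -> bipartition X C (bip_part X C).
Proof.
rewrite inE => /andP [_ /existsP [L CL]]; rewrite /bip_part.
by case: pickP => [//|/(_ L)]; rewrite CL.
Qed.

Lemma bip_part_sub X C : C \in bip_comps X -> bip_part X C \subset C.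
Proof. by move=> /bip_partP /andP []. Qed.

Lemma bip_comps_comps X C : C \in bip_comps X -> C \in comps X.
Proof. by rewrite inE => /andP []. Qed.

Definition bip_basis X := [seq bip_vec C (bip_part X C) | C <- enum (bip_comps X)].

(* [a] vanishes on the non-bipartite components and equals [kappa C] times
   [bip_vec C (bip_part X C)] on each bipartite component [C]. *)
Lemma ann_rho_span X : (ann_rho X <= <<bip_basis X>>)%VS.
Proof.
apply/subvP => a aX.
pose kappa C := if [pick v in C] is Some v then aug_val a v * sign_in (bip_part X C) v else 0.
suff -> : a = \sum_(C in bip_comps X) kappa C *: bip_vec C (bip_part X C).
  apply: memv_suml => C CB; rewrite memvZ // memv_span //.
  by apply: (map_f (fun C => bip_vec C (bip_part X C))); rewrite mem_enum.
apply/rowP => i; rewrite summxE.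
set C0 := Defs.comp X (inl i).
have C0X : C0 \in comps X by exact/comp_comps/augV_inl.
have iC0 : inl i \in C0 by exact/comp_refl/augV_inl.
have other C : C \in bip_comps X -> C != C0 ->
    (kappa C *: bip_vec C (bip_part X C)) 0 i = 0.
  move=> CB CC0; rewrite mxE bip_vec_out ?mulr0 ?bip_part_sub //.
  by apply: contra CC0 => iC; apply/eqP/(comps_disj (bip_comps_comps CB) C0X iC iC0).
have [C0B | C0NB] := boolP (C0 \in bip_comps X); last first.
  rewrite big1; last by move=> C CB; apply: other => //; apply: contraNneq C0NB => <-.
  apply: (aug_val_nonbipartite aX C0X _ iC0).
  by apply: contra C0NB => bC0; rewrite inE C0X.
rewrite (bigD1 C0) //= big1 ?addr0; last by move=> C /andP [CB CC0]; exact: other.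
rewrite mxE bip_vec_in ?bip_part_sub // /kappa.
case: pickP => [v vC0 | /(_ (inl i))]; last by rewrite iC0.
rewrite (aug_val_sign_const aX C0X (bip_partP C0B) vC0 iC0) /= -mulrA.
by rewrite /sign_in; case: (_ \in _); rewrite ?mulrNN !mulr1.
Qed.

(* [bip_vec C] is the only basis vector nonzero at an original vertex of [C]. *)
Lemma free_bip_basis X : free (bip_basis X).
Proof.
rewrite /bip_basis; have : uniq (enum (bip_comps X)) by exact: enum_uniq.
have : {subset enum (bip_comps X) <= bip_comps X} by move=> C; rewrite mem_enum.
elim: (enum (bip_comps X)) => [|C Cs IH] sub /= => [|/andP [CNCs Cs_uniq]].
  by rewrite nil_free.
have CB : C \in bip_comps X by apply: sub; rewrite inE eqxx.
rewrite free_cons IH ?andbT // => [|D DCs]; last by apply: sub; rewrite inE DCs orbT.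
have [i iC] := comps_inl (bip_comps_comps CB).
have /subvP span_sub : (<<[seq bip_vec D (bip_part X D) | D <- Cs]>> <=
                        ann <[unitv R i]>)%VS.
  apply/span_subvP => _ /mapP [D DCs ->]; rewrite ann_line dotC dot_unitv.
  have DB : D \in bip_comps X by apply: sub; rewrite inE DCs orbT.
  rewrite bip_vec_out ?bip_part_sub //; apply: contra CNCs => iD.
  by rewrite (comps_disj (bip_comps_comps CB) (bip_comps_comps DB) iC iD).
apply/negP => /span_sub; rewrite ann_line dotC dot_unitv bip_vec_in ?bip_part_sub //.
by rewrite /sign_in; case: (_ \in _); rewrite ?oppr_eq0 oner_eq0.
Qed.

Lemma dim_ann_rho X : \dim (ann_rho X) = bicomp X.
Proof.
have <- : <<bip_basis X>>%VS = ann_rho X.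
  apply/eqP; rewrite eqEsubv ann_rho_span andbT.
  apply/span_subvP => _ /mapP [C /[!mem_enum] CB ->].
  exact/bip_vec_ann/bip_partP/CB/bip_comps_comps.
by rewrite (eqP (free_bip_basis X)) size_map -cardE.
Qed.

Lemma dim_span_rho X : (\dim (span_rho X) + bicomp X)%N = n.
Proof. by rewrite -dim_ann_rho addnC; exact: dim_ann. Qed.

End AnnihilatorDimension.

Section Facets.
Variables (R : realFieldType) (n : nat).
Local Notation vec := 'rV[R]_n.
Local Notation rho := (@rho R n).
Local Notation span_rho := (@span_rho R n).
Local Notation ann_rho := (@ann_rho R n).
Local Notation cone_rho := (@cone_rho R n).
Local Notation nonpos_on := (@nonpos_on R n).
Local Notation tight := (@tight R n).
Implicit Types (X Y G : {set edge n}) (a b : vec).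

Lemma proper_face_seteq (K F F' : vec -> Prop) :
  seteq F F' -> proper_face K F -> proper_face K F'.
Proof.
move=> FF' [[[x Fx] [a [b [valid EF]]]] FNK].
split; last by move=> F'K; apply: FNK => y; rewrite FF'.
by split; [exists x; rewrite -FF' | exists a, b; split => // y; rewrite -FF'].
Qed.

Lemma facet_seteq (K F F' : vec -> Prop) : seteq F F' -> facet K F -> facet K F'.
Proof.
move=> FF' [properF maxF]; split; first exact: proper_face_seteq properF.
by move=> F'' /maxF le k /le; apply: aff_indep_seteq.
Qed.

Lemma dim_le_cone_rho_bicomp X Y :
  dim_le (cone_rho X) (cone_rho Y) <-> (bicomp Y <= bicomp X)%N.
Proof.
rewrite dim_le_cone_rho_span; have := dim_span_rho R X; have := dim_span_rho R Y; lia.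
Qed.

Lemma bicomp_lt_tight G a : a \notin ann_rho G -> (bicomp G < bicomp (tight G a))%N.
Proof.
by move=> aNG; rewrite -!(dim_ann_rho R) (dimv_lt _ (ann_rho_tight G a)) ?ann_rhoS ?tight_sub.
Qed.

Lemma bicomp_lt_span X Y e : X \subset Y -> e \in Y -> rho e \notin span_rho X ->
  (bicomp Y < bicomp X)%N.
Proof.
move=> XY eY eNX; have := dimv_lt (span_rhoS R XY) (rho_span R eY) eNX.
by have := dim_span_rho R X; have := dim_span_rho R Y; lia.
Qed.

(* Push [a] in direction [b] until the first edge with [dot b (rho e) > 0]
   becomes tight: [t] is the least of the ratios [- dot a (rho e) / dot b (rho e)].
   Since [b] vanishes on the edges tight for [a], these ratios are positive. *)
Lemma ratio_test G a b e0 : nonpos_on G a -> b \in ann_rho (tight G a) ->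
  e0 \in G -> 0 < dot b (rho e0) ->
  exists t e, [/\ 0 < t, e \in G, 0 < dot b (rho e),
                  nonpos_on G (a + t *: b) & dot (a + t *: b) (rho e) = 0].
Proof.
move=> aG /ann_rhoP b0 e0G b_pos.
pose ratio e := - dot a (rho e) / dot b (rho e).
pose P e := (e \in G) && (0 < dot b (rho e)).
have [e /andP [eG be_pos] ratio_min] := arg_minP (P := P) ratio (introT andP (conj e0G b_pos)).
have ae_neg : dot a (rho e) < 0.
  rewrite lt_neqAle aG // andbT; apply/eqP => ae0.
  by move: be_pos; rewrite b0 ?ltxx // tightE eG ae0 eqxx.
exists (ratio e), e; split => //.
- by rewrite divr_gt0 // oppr_gt0.
- move=> e' e'G; rewrite dotDl dotZl.
  have [be'_pos | be'_le0] := ltP 0 (dot b (rho e')).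
    have := ratio_min e'; rewrite /P e'G be'_pos => /(_ isT).
    by rewrite {2}/ratio ler_pdivlMr // => le_ratio; lra.
  have : 0 <= ratio e by rewrite divr_ge0 ?oppr_ge0 ?ltW.
  by have := aG e' e'G; nra.
by rewrite dotDl dotZl divfK ?subrr // gt_eqF.
Qed.

(* With more than one new bipartite component, [ann_rho (tight G a)] contains a
   direction [b] outside [ann_rho G + <[a]>]; following it leads to a proper face
   of larger dimension. *)
Lemma larger_tight_face G a : nonpos_on G a ->
  ((bicomp G).+1 < bicomp (tight G a))%N ->
  exists a', [/\ nonpos_on G a', a' \notin ann_rho G &
                 (bicomp (tight G a') < bicomp (tight G a))%N].
Proof.
move=> aG big; set U := (ann_rho G + <[a]>)%VS.
have [b0 b0H b0NU] : exists2 b0, b0 \in ann_rho (tight G a) & b0 \notin U.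
  apply/subvPn; apply: contraTN big => /dimvS; rewrite -leqNgt (dim_ann_rho R) => le.
  by apply: leq_trans le _; rewrite -(dim_ann_rho R G) dimv_add_line.
have [e eG be] : exists2 e, e \in G & dot b0 (rho e) != 0.
  apply/exists_inP; apply: contraR b0NU => /exists_inPn b00.
  by apply: (subvP (addvSl _ _)); apply/ann_rhoP => e' /b00 /negPn /eqP.
have [b [bH bNU b_pos]] : exists b, [/\ b \in ann_rho (tight G a), b \notin U & 0 < dot b (rho e)].
  have [b0_pos | b0_le0] := ltP 0 (dot b0 (rho e)); first by exists b0.
  by exists (- b0); rewrite !memvN dotNl oppr_gt0 lt_neqAle be b0_le0.
have [t [es [t_pos esG bes_pos a'G a'es]]] := ratio_test aG bH eG b_pos.
set a' := a + t *: b in a'G a'es *.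
exists a'; split => //.
  apply: contra bNU => a'G'.
  have -> : b = t^-1 *: (a' - a) by rewrite addrC addKr scalerA mulVf ?scale1r ?gt_eqF.
  apply/memvZ/memvB; first exact: (subvP (addvSl _ _)).
  by apply: (subvP (addvSr _ _)); exact: memv_line.
have tight_sub : tight G a \subset tight G a'.
  apply/subsetP => e' e'T; move: (e'T); rewrite !tightE => /andP [e'G /eqP ae'].
  by rewrite e'G dotDl dotZl ae' (ann_rhoP _ _ bH e' e'T) mulr0 addr0 eqxx.
apply: (bicomp_lt_span (e := es) tight_sub); first by rewrite tightE esG a'es eqxx.
apply/negP => /(annP _ _ (ann_rho_tight G a)) aes0.
by move: a'es; rewrite dotDl dotZl aes0 add0r => /eqP; rewrite mulf_eq0 !gt_eqF.
Qed.

Lemma proper_face_tight G F : proper_face (cone (PG G)) F ->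
  exists a, [/\ nonpos_on G a, a \notin ann_rho G & seteq F (cone_rho (tight G a))].
Proof.
move=> /[dup] properF [faceF _]; have [a [aG EF]] := tight_of_face faceF.
exists a; split => //; apply/(proper_face_tightP aG).
exact: proper_face_seteq EF properF.
Qed.

Lemma facet_tightP G a : nonpos_on G a -> a \notin ann_rho G ->
  facet (cone (PG G)) (cone_rho (tight G a)) <-> bicomp (tight G a) = (bicomp G).+1.
Proof.
move=> aG aNG; split => [[_ maxF] | bicompE].
  apply/eqP; rewrite eqn_leq bicomp_lt_tight // andbT leqNgt; apply/negP => big.
  have [a' [a'G a'NG lt_a'a]] := larger_tight_face aG big.
  have /dim_le_cone_rho_bicomp := maxF _ ((proper_face_tightP a'G).2 a'NG).
  by rewrite leqNgt lt_a'a.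
split; first exact/proper_face_tightP.
move=> F' /proper_face_tight [a' [a'G a'NG EF']] k /(aff_indep_seteq EF').
by apply: (dim_le_cone_rho_bicomp _ _).2; rewrite bicompE bicomp_lt_tight.
Qed.

End Facets.

Section FacetSubgraphs.
Variables (R : realFieldType) (n : nat).
Local Notation vec := 'rV[R]_n.
Local Notation rho := (@rho R n).
Local Notation ann_rho := (@ann_rho R n).
Local Notation nonpos_on := (@nonpos_on R n).
Local Notation tight := (@tight R n).
Local Notation bip_vec := (@bip_vec R n).
Local Notation sign_in := (@sign_in R n).
Implicit Types (G H : {set edge n}) (C L : {set AV n}) (a v : vec).

Lemma dot_rho_eq0 v k i j : v 0 i = 0 -> v 0 j = 0 -> dot v (rho (k, i, j)) = 0.
Proof. by move=> vi vj; rewrite dot_rho vi vj; case: k => [[]|]; rewrite ?subrr ?addr0 ?oppr0. Qed.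

Lemma dot_rho_neq0 v k i j : (v 0 i == 0) != (v 0 j == 0) -> dot v (rho (k, i, j)) != 0.
Proof.
rewrite dot_rho; case: (eqVneq (v 0 i) 0) => [-> | vi]; case: (eqVneq (v 0 j) 0) => [-> | vj] //= _.
  by case: k => [[]|]; rewrite ?add0r ?oppr_eq0 ?subr0.
by case: k => [[]|]; rewrite ?addr0 ?oppr_eq0 ?sub0r ?oppr_eq0.
Qed.

Lemma bip_vec_eq0 C L i : L \subset C -> (bip_vec C L 0 i == 0) = (inl i \notin C).
Proof.
move=> LC; have [iC | iNC] := boolP (inl i \in C); last by rewrite bip_vec_out ?eqxx.
by rewrite bip_vec_in // /sign_in; case: (_ \in _); rewrite ?oppr_eq0 oner_eq0.
Qed.

Lemma bip_vec_setD C L : L \subset C -> bip_vec C (C :\: L) = - bip_vec C L.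
Proof.
move=> LC; apply/rowP => i; rewrite [RHS]mxE !bip_vecE !inE.
case iL: (inl i \in L); case iC: (inl i \in C) => //=; rewrite ?opprK ?oppr0 //.
by move: (subsetP LC _ iL); rewrite iC.
Qed.

Lemma ann_rho_bip_scale H a C L : a \in ann_rho H -> C \in comps H ->
  bipartition H C L -> exists k, forall i, inl i \in C -> a 0 i = k * bip_vec C L 0 i.
Proof.
move=> aH CH CL; have LC : L \subset C by case/andP: CL.
have [i0 i0C] := comps_inl CH; exists (a 0 i0 * sign_in L (inl i0)) => i iC.
rewrite bip_vec_in // -(aug_val_sign_const aH CH CL iC i0C) /= -mulrA.
by rewrite /sign_in; case: (_ \in _); rewrite ?mulrNN !mulr1.
Qed.

Lemma bip_vec_ann_endpoints G C L k i j : L \subset C ->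
  bip_vec C L \in ann_rho G -> (k, i, j) \in G -> (inl i \in C) = (inl j \in C).
Proof.
move=> LC /ann_rhoP s0 eG; apply/eqP/negPn/negP => ij.
have /eqP := s0 _ eG; apply/negP/dot_rho_neq0; rewrite !bip_vec_eq0 //.
by move: ij; case: (inl i \in C); case: (inl j \in C).
Qed.

Lemma aug_of_touch e t C : t \in aug_of e -> (t.1.2 \in C) || (t.2 \in C) ->
  [|| inl e.1.2 \in C, inl e.2 \in C | inr e \in C].
Proof.
case: e => [[[s|] i] j]; rewrite !inE; first by move=> /eqP -> /= /orP [] ->; rewrite ?orbT.
by case/orP => /eqP -> /= /orP [] ->; rewrite ?orbT.
Qed.

(* On [C], [a] is a multiple of [bip_vec C L]; an edge of [G] reaching [C] has
   both ends in [C] (as [bip_vec C L] vanishes on it), so [a] vanishes on it too. *)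
Lemma tight_touching G a C L e : C \in comps (tight G a) ->
  bipartition (tight G a) C L -> bip_vec C L \in ann_rho G -> e \in G ->
  [|| inl e.1.2 \in C, inl e.2 \in C | inr e \in C] -> e \in tight G a.
Proof.
move=> CH CL sG eG touch; have LC : L \subset C by case/andP: CL.
have [eC | eNC] := boolP (inr e \in C).
  by move: (comps_augV CH eC); rewrite augV_inr => /andP [].
case: e eG touch eNC => [[k i] j] eG /= touch eNC.
have ij := bip_vec_ann_endpoints LC sG eG.
have [iC jC] : inl i \in C /\ inl j \in C.
  by move: touch; rewrite -ij (negbTE eNC) orbF orbb.
have [c cE] := ann_rho_bip_scale (ann_rho_tight G a) CH CL.
have : dot (a - c *: bip_vec C L) (rho (k, i, j)) = 0.
  by apply: dot_rho_eq0; rewrite 3!mxE cE // subrr.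
rewrite dotDl dotNl dotZl (ann_rhoP _ _ sG _ eG) mulr0 subr0 => a0.
by rewrite tightE eG a0 eqxx.
Qed.

Lemma comp_of_bip_vec_ann G a C L : C \in comps (tight G a) ->
  bipartition (tight G a) C L -> bip_vec C L \in ann_rho G -> is_comp_of G (tight G a) C.
Proof.
move=> CH CL sG.
have edgesE : edges_at G C = edges_at (tight G a) C.
  apply/setP => t; rewrite !inE; apply/andP/andP => -[tE tC]; split => //; last first.
    exact: (subsetP (augE_subset (tight_sub G a))).
  move: tE => /augEP [e eG te]; apply/augEP; exists e => //.
  exact: tight_touching CH CL sG eG (aug_of_touch te tC).
by rewrite /is_comp_of edgesE eqxx andbT (comps_of_edges_at (tight_sub G a) CH).
Qed.

Lemma allowed_bip_vec C L e : L \subset C ->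
  allowed_edge (proj L) (proj (C :\: L)) e = (dot (bip_vec C L) (rho e) < 0).
Proof.
move=> LC; case: e => [[k i] j]; have := subsetP LC (inl i); have := subsetP LC (inl j).
case: k => [[]|]; rewrite dot_rho /= !bip_vecE !inE.
all: case: (inl i \in L); case: (inl i \in C); case: (inl j \in L); case: (inl j \in C).
all: move=> //= _ _; apply/idP/idP => // neg; try lra; exfalso; lra.
Qed.

(* [s := bip_vec C L0] spans [ann_rho (tight G a)] modulo [ann_rho G]; writing
   [a = g + c s], the non-tight edges satisfy [c * dot s (rho e) < 0], so [L0] or
   its complement is oriented as required, according to the sign of [c]. *)
Lemma facet_bipartition G a C : nonpos_on G a -> a \notin ann_rho G ->
  bicomp (tight G a) = (bicomp G).+1 ->
  C \in comps (tight G a) -> bipartite (tight G a) C -> ~~ is_comp_of G (tight G a) C ->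
  exists2 L, bipartition (tight G a) C L &
    {in G :\: tight G a, forall e, allowed_edge (proj L) (proj (C :\: L)) e}.
Proof.
move=> aG aNG bicompE CH /existsP [L0 CL0] CnG; have L0C : L0 \subset C by case/andP: CL0.
set s := bip_vec C L0; have sH : s \in ann_rho (tight G a) := bip_vec_ann R CH CL0.
have sNG : s \notin ann_rho G by apply: contra CnG; exact: comp_of_bip_vec_ann.
have annE : (ann_rho G + <[s]>)%VS = ann_rho (tight G a).
  apply/eqP; rewrite eqEdim subv_add ann_rhoS ?tight_sub //= -memvE sH /=.
  rewrite dim_ann_rho bicompE -(dim_ann_rho R G).
  by apply: dimv_lt (addvSl _ _) _ sNG; apply: (subvP (addvSr _ _)); exact: memv_line.
have /memv_addP [g gG [_ /vlineP [c ->] aE]] : a \in (ann_rho G + <[s]>)%VS.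
  by rewrite annE ann_rho_tight.
have cs_neg e : e \in G :\: tight G a -> c * dot s (rho e) < 0.
  rewrite inE tightE => /andP [eNT eG]; rewrite eG /= in eNT.
  have <- : dot a (rho e) = c * dot s (rho e).
    by rewrite aE dotDl (ann_rhoP _ _ gG e eG) add0r dotZl.
  by rewrite lt_neqAle eNT aG.
have [c_pos | c_neg | c0] := ltrgtP 0 c.
- by exists L0 => // e /cs_neg; rewrite allowed_bip_vec // pmulr_rlt0.
- exists (C :\: L0); first exact: bipartition_setD.
  move=> e /cs_neg; rewrite allowed_bip_vec ?subsetDl // bip_vec_setD //.
  by rewrite dotNl oppr_lt0 nmulr_rlt0.
by move: aNG; rewrite aE -c0 scale0r addr0 gG.
Qed.

Lemma facet_subgraph_tight G a : nonpos_on G a -> a \notin ann_rho G ->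
  bicomp (tight G a) = (bicomp G).+1 -> facet_subgraph G (tight G a).
Proof.
move=> aG aNG bicompE; apply/and3P; split; [exact: tight_sub | by rewrite bicompE |].
apply/forall_inP => C CH; apply/implyP => /andP [bC CnG].
have [L CL allowed] := facet_bipartition aG aNG bicompE CH bC CnG.
by apply/existsP; exists L; rewrite CL; apply/forall_inP.
Qed.

Lemma new_bip_comp G H : bicomp H = (bicomp G).+1 ->
  exists C, [&& C \in comps H, bipartite H C & ~~ is_comp_of G H C].
Proof.
move=> bicompE; pose new C := [&& C \in comps H, bipartite H C & ~~ is_comp_of G H C].
have [/existsP // | /existsPn noC] := boolP [exists C, new C].
suff : (bicomp H <= bicomp G)%N by rewrite bicompE ltnn.
by apply: bicomp_le => C CH bC; have := noC C; rewrite /new CH bC /= negbK.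
Qed.

(* Orienting the new bipartite component [C] as the facet condition prescribes,
   [bip_vec C L] vanishes exactly on [H] and is negative on the other edges. *)
Lemma facet_subgraph_witness G H : facet_subgraph G H ->
  exists a, [/\ nonpos_on G a, a \notin ann_rho G & tight G a = H].
Proof.
move=> /and3P [HG bicompE /forall_inP facetC].
have [C /and3P [CH bC CnG]] := new_bip_comp (eqP bicompE).
have /existsP [L /andP [CL /forall_inP allowed]] :=
  implyP (facetC C CH) (introT andP (conj bC CnG)).
have LC : L \subset C by case/andP: CL.
have neg e : e \in G :\: H -> dot (bip_vec C L) (rho e) < 0.
  by move=> eGH; rewrite -allowed_bip_vec // allowed.
have zero e : e \in H -> dot (bip_vec C L) (rho e) = 0.
  exact: (ann_rhoP _ _ (bip_vec_ann R CH CL)).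
have [e0 e0GH] : exists e, e \in G :\: H.
  apply/set0Pn; apply: contraTneq bicompE => /eqP; rewrite setD_eq0 => GH.
  have -> : H = G by apply/eqP; rewrite eqEsubset HG GH.
  by rewrite ltn_eqF.
exists (bip_vec C L); split.
- move=> e eG; have [eH | eNH] := boolP (e \in H); first by rewrite zero.
  by rewrite ltW // neg // inE eNH.
- apply/negP => /ann_rhoP a0; have := neg e0 e0GH.
  by rewrite a0 ?ltxx //; case/setDP: e0GH.
apply/setP => e; rewrite tightE; have [eH | eNH] := boolP (e \in H).
  by rewrite (subsetP HG) // zero // eqxx.
apply/negbTE/andP => -[eG /eqP ae0].
by have := neg e; rewrite inE eNH eG ae0 ltxx => /(_ isT).
Qed.

End FacetSubgraphs.

Theorem mainTheorem10 (R : realFieldType) (n : nat) (G : {set edge n})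
  (HG : wf_graph G) (F : 'rV[R]_n -> Prop) :
  facet (cone (@PG R n G)) F <->
  exists H : {set edge n}, facet_subgraph G H /\ seteq (cone (@PG R n H)) F.
Proof.
split => [facetF | [H [facetH EF]]].
  have [[faceF _] _] := facetF; have [a [aG EF]] := tight_of_face faceF.
  have facet_a := facet_seteq EF facetF.
  have aNG : a \notin ann_rho R G by apply/(proper_face_tightP aG); case: facet_a.
  exists (tight G a); split; last by move=> x; rewrite cone_PG EF.
  by apply: facet_subgraph_tight => //; apply/facet_tightP.
have [a [aG aNG tightH]] := facet_subgraph_witness R facetH.
have /and3P [_ /eqP bicompE _] := facetH.
apply: (facet_seteq (F := cone_rho (tight G a))).
  by move=> x; rewrite tightH -EF cone_PG.
by apply/facet_tightP; rewrite ?tightH.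
Qed.
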